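(* Let $S$ be a multiplicatively closed subset of $R$ and $M$ an $R$-module. Consider: (a) $S^{-1}M$ satisfies the dual of Property $\mathcal{A}$ as an $R$-module; (b) $S^{-1}M$ satisfies the dual of Property $\mathcal{A}$ as an $S^{-1}R$-module; (c) $M$ satisfies the dual of Property $\mathcal{A}$ as an $R$-module. Then (a) and (b) are equivalent. If moreover $S\cap W_R(M)=\emptyset$ and $S\cap Z_R(M)=\emptyset$, then (a), (b), (c) are all equivalent.
   Context: All rings are commutative with identity. For an $R$-module $M$, $W_R(M)=\{r\in R : rM\neq M\}$ and $Z_R(M)=\{r\in R: rm=0 \text{ for some } 0\neq m\in M\}$. An $R$-module $M$ satisfies the dual of Property $\mathcal{A}$ if for every finitely generated ideal $I$ of $R$ with $I\subseteq W_R(M)$ we have $IM\neq M$. *)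

From HB Require Import structures.
From mathcomp Require Import all_boot all_order all_algebra.
Set Implicit Arguments. Unset Strict Implicit. Unset Printing Implicit Defensive.
Import Order.TTheory GRing.Theory.
Local Open Scope ring_scope.

(* Rings: commutative with identity (possibly trivial, since S^{-1}R is the
   zero ring when 0 \in S): comPzRingType.
   A module structure is given generically by a scalar action
   act : A -> N -> N on an additive group N (needed for viewing an
   S^{-1}R-module as an R-module by restriction of scalars). *)

Definition mult_closed (R : comPzRingType) (S : pred R) : Prop :=
  1 \in S /\ (forall s t, s \in S -> t \in S -> s * t \in S).

Definition ideal_gen (A : comPzRingType) (gs : seq A) (a : A) : Prop :=
  exists c : 'I_(size gs) -> A, a = \sum_(i < size gs) c i * gs`_i.

Definition Wset (A : comPzRingType) (N : zmodType) (act : A -> N -> N) (a : A)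
  : Prop := exists n : N, forall n' : N, act a n' <> n.

Definition Zset (A : comPzRingType) (N : zmodType) (act : A -> N -> N) (a : A)
  : Prop := exists n : N, n <> 0 /\ act a n = 0.

Definition in_IN (A : comPzRingType) (N : zmodType) (act : A -> N -> N)
  (I : A -> Prop) (n : N) : Prop :=
  exists ps : seq (A * N), (forall p, p \in ps -> I p.1) /\
    n = \sum_(p <- ps) act p.1 p.2.

Definition dualA (A : comPzRingType) (N : zmodType) (act : A -> N -> N) : Prop :=
  forall gs : seq A,
    (forall a, ideal_gen gs a -> Wset act a) ->
    exists n : N, ~ in_IN act (ideal_gen gs) n.

Definition is_ring_localization (R RS : comPzRingType) (S : pred R)
  (phi : R -> RS) : Prop :=
  [/\ (forall s, s \in S -> exists z, phi s * z = 1),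
      (forall y : RS, exists r s, s \in S /\ y * phi s = phi r)
    & (forall r, phi r = 0 -> exists2 s, s \in S & s * r = 0)].

Definition is_module_localization (R RS : comPzRingType) (S : pred R)
  (phi : R -> RS) (M : lmodType R) (N : lmodType RS) (f : M -> N) : Prop :=
  [/\ (forall m1 m2, f (m1 + m2) = f m1 + f m2),
      (forall r m, f (r *: m) = phi r *: f m),
      (forall n : N, exists m s, s \in S /\ phi s *: n = f m)
    & (forall m, f m = 0 -> exists2 s, s \in S & s *: m = 0)].

From HB Require Import structures.
From mathcomp Require Import all_boot all_order all_algebra.
From Stdlib Require Import Classical ClassicalEpsilon.
Set Implicit Arguments.
Unset Strict Implicit.
Unset Printing Implicit Defensive.
Import GRing.Theory.
Local Open Scope ring_scope.

(* Every finitely generated ideal of S^{-1}R is generated by images of elements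
   of R (each generator y is associate to phi r with y = r/s), so the ideals
   occurring in the dual of Property A for S^{-1}M over R and over S^{-1}R
   correspond to each other, with the same W-sets and the same submodules I N;
   this gives (a) <-> (b).  When no element of S is a zero divisor or a
   non-surjective scalar on M, the localization map M -> S^{-1}M is an
   R-linear bijection, and the dual of Property A is invariant under such
   isomorphisms, which gives (a) <-> (c). *)

Section IdealGen.
Variable A : comPzRingType.
Implicit Types (gs hs : seq A) (a b r : A).

Lemma ideal_gen_ind gs (P : A -> Prop) :
  P 0 -> (forall a b, P a -> P b -> P (a + b)) ->
  (forall r i, (i < size gs)%N -> P (r * gs`_i)) ->
  forall a, ideal_gen gs a -> P a.
Proof. by move=> P0 PD Pg a [c ->]; apply: (big_ind P) => // i _; apply: Pg. Qed.

Lemma ideal_gen0 gs : ideal_gen gs 0.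
Proof. by exists (fun _ => 0); rewrite big1 // => i _; rewrite mul0r. Qed.

Lemma ideal_genD gs a b : ideal_gen gs a -> ideal_gen gs b -> ideal_gen gs (a + b).
Proof.
move=> [c ->] [d ->]; exists (fun i => c i + d i).
by rewrite -big_split; apply: eq_bigr => i _; rewrite mulrDl.
Qed.

Lemma ideal_genMl gs r a : ideal_gen gs a -> ideal_gen gs (r * a).
Proof.
move=> [c ->]; exists (fun i => r * c i).
by rewrite mulr_sumr; apply: eq_bigr => i _; rewrite mulrA.
Qed.

Lemma ideal_gen_nth gs i : (i < size gs)%N -> ideal_gen gs gs`_i.
Proof.
move=> lt_i; exists (fun j => (val j == i)%:R).
rewrite (bigD1 (Ordinal lt_i)) //= eqxx mul1r big1 ?addr0 // => j ne_ji.
by rewrite (_ : val j == i = false) ?mul0r //; apply: contraNF ne_ji => /eqP eji;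
  apply/eqP/val_inj.
Qed.

Lemma ideal_gen_sub gs hs :
  (forall i, (i < size gs)%N -> ideal_gen hs gs`_i) ->
  forall a, ideal_gen gs a -> ideal_gen hs a.
Proof.
move=> gs_hs; apply: ideal_gen_ind => [|a b|r i /gs_hs].
- exact: ideal_gen0.
- exact: ideal_genD.
- exact: ideal_genMl.
Qed.

End IdealGen.

Lemma ideal_gen_rmorph (A B : comPzRingType) (phi : {rmorphism A -> B})
    (gs : seq A) (a : A) :
  ideal_gen gs a -> ideal_gen (map phi gs) (phi a).
Proof.
move: a; apply: ideal_gen_ind => [|a b Ia Ib|r i lt_i].
- by rewrite rmorph0; apply: ideal_gen0.
- by rewrite rmorphD; apply: ideal_genD.
rewrite rmorphM -(nth_map 0 0) //; apply/ideal_genMl/ideal_gen_nth.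
by rewrite size_map.
Qed.

Section SubmoduleGen.
Variables (A : comPzRingType) (N : zmodType) (act : A -> N -> N).
Implicit Types (I : A -> Prop) (n : N).

Lemma in_IN_ind I (P : N -> Prop) :
  P 0 -> (forall x y, P x -> P y -> P (x + y)) ->
  (forall a n, I a -> P (act a n)) ->
  forall n, in_IN act I n -> P n.
Proof.
move=> P0 PD Pact n [ps [Ips ->]]; elim: ps Ips => [|p ps IHps] Ips.
  by rewrite big_nil.
rewrite big_cons; apply: PD; first by apply/Pact/Ips; rewrite inE eqxx.
by apply: IHps => q ps_q; apply: Ips; rewrite inE ps_q orbT.
Qed.

Lemma in_IN0 I : in_IN act I 0.
Proof. by exists [::]; rewrite big_nil. Qed.

Lemma in_IND I x y : in_IN act I x -> in_IN act I y -> in_IN act I (x + y).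
Proof.
move=> [ps [Ips ->]] [qs [Iqs ->]]; exists (ps ++ qs); rewrite big_cat.
by split=> // p; rewrite mem_cat => /orP[/Ips|/Iqs].
Qed.

Lemma in_IN_act I a n : I a -> in_IN act I (act a n).
Proof.
by move=> Ia; exists [:: (a, n)]; rewrite big_seq1; split=> // p /[1!inE] /eqP->.
Qed.

End SubmoduleGen.

Lemma in_IN_sub (A B : comPzRingType) (N : zmodType) (act : A -> N -> N)
    (actB : B -> N -> N) (I : A -> Prop) (J : B -> Prop) :
  (forall a n, I a -> in_IN actB J (act a n)) ->
  forall n, in_IN act I n -> in_IN actB J n.
Proof.
move=> IJ; apply: in_IN_ind => [|x y|//]; [exact: in_IN0 | exact: in_IND].
Qed.

Lemma dualA_transfer (A B : comPzRingType) (N : zmodType)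
    (actA : A -> N -> N) (actB : B -> N -> N) :
  (forall gs : seq B, exists hs : seq A,
     (forall a, ideal_gen hs a ->
        exists2 b, ideal_gen gs b & (Wset actB b -> Wset actA a))
     /\ (forall n, in_IN actB (ideal_gen gs) n -> in_IN actA (ideal_gen hs) n)) ->
  dualA actA -> dualA actB.
Proof.
move=> transfer dualAA gs gsW; have [hs [hs_gs INgs_INhs]] := transfer gs.
have [|n nINhs] := dualAA hs; last by exists n => /INgs_INhs.
by move=> a /hs_gs[b /gsW Wb /(_ Wb)].
Qed.

Section ModuleMorphism.
Variables (A : comPzRingType) (M N : zmodType).
Variables (act1 : A -> M -> M) (act2 : A -> N -> N) (f : M -> N).
Hypothesis fD : {morph f : x y / x + y}.
Hypothesis fA : forall a, {morph f : m / act1 a m >-> act2 a m}.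

Lemma morph_add0 : f 0 = 0.
Proof. by apply: (@addrI _ (f 0)); rewrite -fD !addr0. Qed.

Lemma in_IN_morph I m : in_IN act1 I m -> in_IN act2 I (f m).
Proof.
move: m; apply: in_IN_ind => [|x y|a m Ia].
- by rewrite morph_add0; apply: in_IN0.
- by rewrite fD; apply: in_IND.
by rewrite fA; apply: in_IN_act.
Qed.

End ModuleMorphism.

Lemma dualA_iso (A : comPzRingType) (M N : zmodType)
    (act1 : A -> M -> M) (act2 : A -> N -> N) (f : M -> N) (g : N -> M) :
  {morph g : x y / x + y} -> (forall a, {morph f : m / act1 a m >-> act2 a m}) ->
  (forall a, {morph g : n / act2 a n >-> act1 a n}) ->
  cancel f g -> cancel g f ->
  dualA act1 -> dualA act2.
Proof.
move=> gD fA gA fK gK dualA1 gs gsW; have [|m mNIN] := dualA1 gs.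
  move=> a /gsW[n Wn]; exists (g n) => m' eq_m'.
  by apply: (Wn (f m')); rewrite -fA eq_m' gK.
by exists (f m) => /(in_IN_morph gD gA); rewrite fK.
Qed.

Lemma dualA_bij (A : comPzRingType) (M N : zmodType)
    (act1 : A -> M -> M) (act2 : A -> N -> N) (f : M -> N) :
  {morph f : x y / x + y} -> (forall a, {morph f : m / act1 a m >-> act2 a m}) ->
  injective f -> (forall n, exists m, f m = n) ->
  dualA act1 <-> dualA act2.
Proof.
move=> fD fA f_inj f_surj.
pose g n := proj1_sig (constructive_indefinite_description _ (f_surj n)).
have gK : cancel g f.
  by move=> n; rewrite /g; case: constructive_indefinite_description.
have fK : cancel f g by move=> m; apply/f_inj/gK.
have gD : {morph g : x y / x + y} by move=> x y; apply: f_inj; rewrite fD !gK.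
have gA a : {morph g : n / act2 a n >-> act1 a n}.
  by move=> n; apply: f_inj; rewrite fA !gK.
by split; apply: dualA_iso; eassumption.
Qed.

Lemma Wset_scale_unit (A : comPzRingType) (N : lmodType A) (y u z : A) :
  u * z = 1 -> Wset (fun (a : A) (n : N) => a *: n) (y * u) ->
  Wset (fun (a : A) (n : N) => a *: n) y.
Proof.
move=> uz1 [n Wn]; exists n => n' eq_n'; apply: (Wn (z *: n')).
by rewrite scalerA -mulrA uz1 mulr1.
Qed.

Section Localization.
Variables (R RS : comPzRingType) (phi : {rmorphism R -> RS}) (N : lmodType RS).

Local Notation actR := (fun (r : R) (n : N) => phi r *: n).
Local Notation actRS := (fun (y : RS) (n : N) => y *: n).

Lemma scale_ideal_gen_map (hs : seq R) (y : RS) (n : N) :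
  ideal_gen (map phi hs) y -> in_IN actR (ideal_gen hs) (y *: n).
Proof.
move: y; apply: ideal_gen_ind => [|a b INa INb|c i].
- by rewrite scale0r; apply: in_IN0.
- by rewrite scalerDl; apply: in_IND.
rewrite size_map => lt_i; rewrite (nth_map 0) // mulrC -scalerA.
by apply: (in_IN_act actR); apply: ideal_gen_nth.
Qed.

Variable S : pred R.
Hypothesis S_mult_closed : mult_closed S.
Hypothesis phi_loc : is_ring_localization S phi.

Lemma loc_ideal_gen_lift (gs : seq RS) :
  exists hs : seq R, forall y, ideal_gen gs y <-> ideal_gen (map phi hs) y.
Proof.
have [phi_unit phi_frac _] := phi_loc.
pose num y := proj1_sig (constructive_indefinite_description _ (phi_frac y)).
have num_frac y : exists s, s \in S /\ y * phi s = phi (num y).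
  by rewrite /num; case: constructive_indefinite_description.
exists (map num gs) => y; rewrite -map_comp; split; apply: ideal_gen_sub => i;
  rewrite ?size_map => lt_i; rewrite ?(nth_map 0) //=;
  have [s [Ss num_i]] := num_frac gs`_i.
- have [z sz1] := phi_unit s Ss.
  rewrite -[gs`_i]mulr1 -sz1 mulrA num_i mulrC; apply: ideal_genMl.
  have := @ideal_gen_nth _ (map (phi \o num) gs) i.
  by rewrite size_map (nth_map 0) //; apply.
- by rewrite -num_i mulrC; apply/ideal_genMl/ideal_gen_nth.
Qed.

Lemma loc_ideal_gen_frac (gs : seq R) (y : RS) :
  ideal_gen (map phi gs) y ->
  exists s r, [/\ s \in S, ideal_gen gs r & y * phi s = phi r].
Proof.
have [S1 SM] := S_mult_closed; have [_ phi_frac _] := phi_loc.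
move: y; apply: ideal_gen_ind
  => [|y1 y2 [s1 [r1 [Ss1 Ir1 E1]]] [s2 [r2 [Ss2 Ir2 E2]]]|c i].
- by exists 1, 0; rewrite rmorph0 mul0r; split=> //; apply: ideal_gen0.
- exists (s1 * s2), (r1 * s2 + r2 * s1); split; first exact: SM.
    by apply: ideal_genD; rewrite mulrC; apply: ideal_genMl.
  by rewrite !rmorphM rmorphD !rmorphM mulrDl mulrA E1 mulrCA E2 (mulrC (phi s1)).
rewrite size_map => lt_i; rewrite (nth_map 0) //.
have [t [u [Su E]]] := phi_frac c; exists u, (t * gs`_i); split=> //.
  exact/ideal_genMl/ideal_gen_nth.
by rewrite rmorphM -E mulrAC.
Qed.

Lemma loc_dualA_restrict : dualA actR <-> dualA actRS.
Proof.
have [phi_unit _ _] := phi_loc.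
split; apply: dualA_transfer => gs.
- have [hs gs_hs] := loc_ideal_gen_lift gs; exists hs; split.
    by move=> a Ia; exists (phi a) => //; apply/gs_hs/ideal_gen_rmorph.
  by apply: in_IN_sub => y n /gs_hs /= INy; apply: scale_ideal_gen_map.
- exists (map phi gs); split.
    move=> y /loc_ideal_gen_frac[s [r [Ss Ir E]]]; exists r => // Wr.
    by have [z sz1] := phi_unit s Ss; apply: (Wset_scale_unit sz1); rewrite E.
  by apply: in_IN_sub => r n Ir; apply: in_IN_act; apply: ideal_gen_rmorph.
Qed.

Variables (M : lmodType R) (f : M -> N).
Hypothesis f_loc : is_module_localization S phi f.

Local Notation actM := (fun (r : R) (m : M) => r *: m).

Lemma loc_module_inj : (forall s, s \in S -> ~ Zset actM s) -> injective f.
Proof.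
have [fD _ _ f_ker] := f_loc; move=> noZ x y fxy.
have [|s Ss sxy] := f_ker (x - y).
  by apply: (addIr (f y)); rewrite -fD subrK fxy add0r.
apply: subr0_eq; case: (eqVneq (x - y) 0) => [//|nz]; case: (noZ s Ss).
by exists (x - y); split=> //; apply/eqP.
Qed.

Lemma loc_module_surj : (forall s, s \in S -> ~ Wset actM s) ->
  forall n : N, exists m, f m = n.
Proof.
have [phi_unit _ _] := phi_loc; have [_ fZ f_frac _] := f_loc.
move=> noW n; have [m [s [Ss E]]] := f_frac n.
have [m' sm'_m] : exists m', s *: m' = m.
  apply: NNPP => nodiv; apply: (noW s Ss); exists m => m' sm'.
  by apply: nodiv; exists m'.
exists m'; have [z sz1] := phi_unit s Ss.
by rewrite -[n]scale1r -sz1 mulrC -scalerA E -sm'_m fZ scalerA mulrC sz1 scale1r.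
Qed.

End Localization.

Theorem corollary2p10 (R : comPzRingType) (S : pred R) (M : lmodType R)
  (RS : comPzRingType) (phi : {rmorphism R -> RS}) (N : lmodType RS)
  (f : M -> N) :
  mult_closed S ->
  is_ring_localization S phi ->
  is_module_localization S phi f ->
  (* (a) <-> (b) *)
  (dualA (fun (r : R) (n : N) => phi r *: n) <-> dualA (fun (y : RS) (n : N) => y *: n))
  /\
  ((forall s, s \in S -> ~ Wset (fun (r : R) (m : M) => r *: m) s) ->
   (forall s, s \in S -> ~ Zset (fun (r : R) (m : M) => r *: m) s) ->
   (* (a) <-> (c) and (b) <-> (c) *)
   (dualA (fun (r : R) (n : N) => phi r *: n) <-> dualA (fun (r : R) (m : M) => r *: m))
   /\
   (dualA (fun (y : RS) (n : N) => y *: n) <-> dualA (fun (r : R) (m : M) => r *: m))).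
Proof.
move=> S_mult phi_loc f_loc.
have ab := loc_dualA_restrict N S_mult phi_loc.
split=> // noW noZ; have [fD fZ _ _] := f_loc.
have ca : dualA (fun (r : R) (m : M) => r *: m) <->
          dualA (fun (r : R) (n : N) => phi r *: n).
  apply: dualA_bij fD fZ _ _.
    exact: loc_module_inj f_loc noZ.
  exact: (loc_module_surj (N := N) phi_loc f_loc noW).
by split; [apply: iff_sym | apply: iff_trans (iff_sym ab) (iff_sym ca)].
Qed.
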